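(* Let $G$ be a persistent graph with vertex order $<$, let $k\ge 4$, and let $p_1,\dots,p_k\in V(G)$ form an induced cycle in this order (edges $\{p_i,p_{i+1}\}$ for $1\le i<k$ and $\{p_k,p_1\}$). If $p_2$ is the leftmost of $p_1,\dots,p_k$, then each of $p_4,\dots,p_k$ lies to the left of both $p_1$ and $p_3$.
   Context: A persistent graph is a graph $G$ together with a linear order $v_1<v_2<\dots<v_n$ on $V(G)$ such that (1) $\{v_i,v_{i+1}\}\in E(G)$ for all $i$; (2) X-property: for all $p<q<r<s$, if $\{p,r\}\in E(G)$ and $\{q,s\}\in E(G)$ then $\{p,s\}\in E(G)$; (3) bar-property: if $\{p,q\}\in E(G)$ and $p,q$ are not consecutive in the order, then there is a vertex $r$ with $p<r<q$ adjacent to both $p$ and $q$. ''Left of'' refers to the order $<$. *)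

(* Vertices of an n-vertex persistent graph are 'I_n, and the
   linear order v_1 < ... < v_n is the natural order on ordinals. *)
From mathcomp Require Import all_boot.
Set Implicit Arguments.
Unset Strict Implicit.
Unset Printing Implicit Defensive.

Definition simple_graph (n : nat) (E : rel 'I_n) : Prop :=
  (forall u v, E u v = E v u) /\ (forall u, ~~ E u u).

Definition persistent (n : nat) (E : rel 'I_n) : Prop :=
  [/\ simple_graph E,
      (forall u v : 'I_n, nat_of_ord v = u.+1 -> E u v),
      (* (2) X-property *)
      (forall p q r s : 'I_n, p < q -> q < r -> r < s ->
         E p r -> E q s -> E p s)
    & (* (3) bar-property *)
      (forall p q : 'I_n, p < q -> E p q -> nat_of_ord q != p.+1 ->
         exists r : 'I_n, [/\ p < r, r < q, E p r & E r q])].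

(* p 0, ..., p (k-1) (i.e. p_1, ..., p_k) are distinct and form an induced
   cycle in this order: p i ~ p j iff i, j are cyclically consecutive. *)
Definition induced_cycle (n : nat) (E : rel 'I_n) (k : nat) (p : nat -> 'I_n)
  : Prop :=
  (forall i j, i < k -> j < k -> p i = p j -> i = j) /\
  (forall i j, i < k -> j < k ->
     E (p i) (p j) = (i.+1 %% k == j) || (j.+1 %% k == i)).

From mathcomp Require Import all_boot zify.

(* Let a = p_2 be the leftmost vertex.  Without it the cycle is the path
   p_3, p_4, ..., p_k, p_1 from one neighbour of a to the other, with inner
   vertices not adjacent to a; by symmetry let p_3 < p_1.  The X-property puts
   every neighbour of a right of p_3 to the right of the whole path but its
   last vertex.  The leftmost such neighbour y is adjacent to p_3 by the
   bar-property, so y <> p_1, and if p_k were right of p_3 the X-property on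
   p_3 < p_k < y < p_1 would create the chord p_3 p_1.  So p_k < p_3, and
   walking back along the path no vertex can jump over p_3, since the
   X-property would then make it adjacent to a. *)

Set Implicit Arguments.
Unset Strict Implicit.
Unset Printing Implicit Defensive.

Section Persistent.
Variables (n : nat) (E : rel 'I_n).
Hypothesis persE : persistent E.

Lemma adj_consecutive_right_neighbors (u v w : 'I_n) :
  u < v -> v < w -> E u v -> E u w ->
  (forall z : 'I_n, v < z -> z < w -> ~~ E u z) -> E v w.
Proof.
(* Follow bar-property witnesses r from u towards v; by the X-property a
   witness beyond v would be a neighbour of u between v and w. *)
case: persE => _ _ HX Hbar uv vw Euv Euw no_nbr.
suff walk d (r : 'I_n) : v - r <= d -> u <= r <= v -> E r w -> E v w.
  by apply: (walk (v - u) u) => //; rewrite leqnn ltnW.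
elim: d r => [|d IH] r rd /andP[ur rv] Erw.
  by have -> : v = r by apply: val_inj => /=; lia.
have [vr|rv'] := leqP v r.
  by have -> : v = r by apply: val_inj => /=; lia.
have [s [rs sw Ers Esw]] :=
  Hbar r w (ltn_trans rv' vw) Erw ltac:(apply/eqP; lia).
have [sv|vs] := leqP s v; first by apply: (IH s) => //; lia.
have Eus : E u s.
  move: ur; rewrite leq_eqVlt => /orP[/eqP ur|ur]; last exact: (HX u r v s).
  by have -> : u = r by apply: val_inj.
by have := no_nbr s vs sw; rewrite Eus.
Qed.

Record detour (a : 'I_n) (q : nat -> 'I_n) (m : nat) : Prop := {
  detour_first : E a (q 0);
  detour_last : E a (q m);
  detour_avoid : forall i, 0 < i < m -> ~~ E a (q i);
  detour_ends : ~~ E (q 0) (q m);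
  detour_inj : forall i j, i <= m -> j <= m -> q i = q j -> i = j;
  detour_step : forall j, j < m -> E (q j) (q j.+1)
}.

Section Detour.
Variables (a : 'I_n) (q : nat -> 'I_n) (m : nat).
Hypotheses (a_left : forall i, i <= m -> a < q i) (dq : detour a q m).

Lemma detour_left_of_right_neighbor (z : 'I_n) :
  E a z -> q 0 < z -> forall j, j < m -> q j < z.
Proof.
case: persE => _ _ HX _ Eaz q0z; elim=> [//|j IH] jm.
have qjz := IH (ltnW jm).
have := detour_avoid dq (i := j.+1) ltac:(lia).
case: (ltngtP (q j.+1) z) => [//|zq|/val_inj ->]; last by rewrite Eaz.
by rewrite (HX a (q j) z (q j.+1)) // ?(detour_step dq) ?a_left //; lia.
Qed.

Lemma detour_penultimate_left : 2 <= m -> q 0 < q m -> q m.-1 < q 0.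
Proof.
case: persE => _ _ HX _ m2 q0m.
pose P z := E a z && (q 0 < z).
have Pqm : P (q m) by rewrite /P (detour_last dq).
case: (arg_minnP (@nat_of_ord n) Pqm) => y /andP[Eay q0y] y_min.
have Eq0y : E (q 0) y.
  apply: (adj_consecutive_right_neighbors (a_left (leq0n m)) q0y
    (detour_first dq) Eay) => z q0z zy; apply/negP => Eaz.
  by have := y_min z; rewrite /P Eaz q0z => /(_ isT); lia.
have ym : y < q m.
  have := y_min (q m) Pqm; rewrite leq_eqVlt => /orP[/eqP/val_inj ym|//].
  by have := detour_ends dq; rewrite -ym Eq0y.
have qpy := detour_left_of_right_neighbor Eay q0y (j := m.-1) ltac:(lia).
case: (ltngtP (q m.-1) (q 0)) => [//|q0p|/val_inj/(detour_inj dq)]; last by lia.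
have := detour_ends dq; rewrite (HX (q 0) (q m.-1) y (q m)) //.
by have := detour_step dq (j := m.-1) ltac:(lia); rewrite prednK //; lia.
Qed.

Lemma detour_interior_left_of_first :
  q 0 < q m -> forall i, 0 < i < m -> q i < q 0.
Proof.
case: persE => [[Esym _] _ HX _] q0m i /andP[i0 im].
have qp := detour_penultimate_left ltac:(lia) q0m.
suff down d : d < m.-1 -> q (m.-1 - d) < q 0.
  have := down (m.-1 - i) ltac:(lia).
  by rewrite (_ : m.-1 - (m.-1 - i) = i) //; lia.
elim: d => [|d IH] dm; first by rewrite subn0.
set j := m.-1 - d.+1.
have Ej : E (q (m.-1 - d)) (q j).
  by rewrite Esym (_ : m.-1 - d = j.+1) ?(detour_step dq) //; lia.
have := detour_avoid dq (i := j) ltac:(lia).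
case: (ltngtP (q j) (q 0)) => [//|q0j|/val_inj/(detour_inj dq)]; last by lia.
rewrite (HX a (q (m.-1 - d)) (q 0) (q j)) ?(detour_first dq) ?IH ?a_left //.
all: lia.
Qed.

End Detour.

Lemma detour_rev (a : 'I_n) (q : nat -> 'I_n) (m : nat) :
  detour a q m -> detour a (fun j => q (m - j)) m.
Proof.
case: persE => [[Esym _] _ _ _] [first last avoid ends inj step].
split; rewrite ?subn0 ?subnn //.
- by move=> i im; apply: avoid; lia.
- by rewrite Esym.
- by move=> i j im jm /inj ij; lia.
- by move=> j jm; rewrite Esym (_ : m - j = (m - j.+1).+1) ?step //; lia.
Qed.

Lemma detour_interior_left (a : 'I_n) (q : nat -> 'I_n) (m : nat) :
  (forall i, i <= m -> a < q i) -> detour a q m ->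
  forall i, 0 < i < m -> (q i < q 0) && (q i < q m).
Proof.
move=> a_left dq i im.
case: (ltngtP (q 0) (q m)) => [q0m|qm0|/val_inj/(detour_inj dq)]; last by lia.
  by have := detour_interior_left_of_first a_left dq q0m im; lia.
have a_left' j : j <= m -> a < q (m - j) by move=> jm; apply: a_left; lia.
have /= := detour_interior_left_of_first a_left' (detour_rev dq).
rewrite subn0 subnn => /(_ qm0 (m - i)); rewrite (_ : m - (m - i) = i); lia.
Qed.

End Persistent.

Lemma succn_modn_eq k i j : i < k -> j < k ->
  (i.+1 %% k == j) = (i.+1 == j) || (i.+1 == k) && (j == 0).
Proof.
move=> ik jk; case: (ltngtP i.+1 k) => [ik'|ki|->]; last by rewrite modnn; lia.
  by rewrite modn_small //; lia.
lia.
Qed.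

Section InducedCycle.
Variables (n : nat) (E : rel 'I_n) (k : nat) (p : nat -> 'I_n).
Hypothesis cyc : induced_cycle E k p.

Lemma induced_cycle_rot r : induced_cycle E k (fun j => p ((j + r) %% k)).
Proof.
case: cyc => inj adj; split=> i j ik jk; have k0 : 0 < k by lia.
  move/(inj _ _ (ltn_pmod _ k0) (ltn_pmod _ k0))/eqP.
  by rewrite eqn_modDr !modn_small // => /eqP.
have succ_mod x : (x %% k).+1 = x.+1 %[mod k] by rewrite -addn1 modnDml addn1.
rewrite adj ?ltn_pmod // !succ_mod -!addSn !eqn_modDr.
by rewrite !(modn_small jk) !(modn_small ik).
Qed.

Lemma induced_cycle_detour : 4 <= k -> detour E (p k.-1) p (k - 2).
Proof.
case: cyc => inj adj k4.
have adjE i j : i < k -> j < k -> E (p i) (p j) =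
  (i.+1 == j) || (i.+1 == k) && (j == 0)
  || (j.+1 == i) || (j.+1 == k) && (i == 0).
  by move=> ik jk; rewrite adj // !succn_modn_eq // orbA.
split=> [||i ik||i j ik jk /inj|j jk]; try (rewrite adjE; lia).
by apply; lia.
Qed.

Lemma induced_cycle_last_leftmost : persistent E -> 4 <= k ->
  (forall i, i < k -> p k.-1 <= p i) ->
  forall i, 0 < i < k - 2 -> (p i < p 0) && (p i < p (k - 2)).
Proof.
move=> persE k4 leftmost.
apply: (detour_interior_left persE _ (induced_cycle_detour k4)).
move=> i ik; rewrite ltn_neqAle leftmost 1?andbT; last by lia.
by apply/negP => /eqP/val_inj/(proj1 cyc); lia.
Qed.

End InducedCycle.

Theorem lemma3 (n : nat) (E : rel 'I_n) (k : nat) (p : nat -> 'I_n) :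
  persistent E -> 4 <= k -> induced_cycle E k p ->
  (forall i, i < k -> p 1 <= p i) ->
  forall i, 3 <= i < k -> (p i < p 0) && (p i < p 2).
Proof.
move=> persE k4 cyc leftmost i /andP[i3 ik].
have k0 : 0 < k by lia.
have rot_last : (k.-1 + 2) %% k = 1
  by rewrite (_ : k.-1 + 2 = k + 1) ?modnDl ?modn_small //; lia.
(* Rotating by two makes p 1 the last vertex, p 2 the first and p 0 the
   second to last. *)
have := induced_cycle_last_leftmost (induced_cycle_rot cyc 2) persE k4.
rewrite rot_last => /(_ (fun j _ => leftmost _ (ltn_pmod _ k0)) (i - 2)).
by rewrite add0n !subnK ?modnn ?modn_small //; lia.
Qed.
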